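(* Let $A\in\mathbb{R}^{m\times n}$, $b\in\mathbb{R}^m$ with $Ax=b$ consistent, and let $\{x^k\}_{k\ge0}$, $\{p_k\}_{k\ge0}$, $\{\delta_k\}$, $\{\eta_k^i\}$, $\{S_k\}$ be generated by the IS-Krylov algorithm described in the context, with $r^k=Ax^k-b$ and $j_k=\max\{k-\ell+1,0\}$. Then for any integers $t,v,k$ with $j_k\le t<v\le k$: (i) $\langle p_v,p_t\rangle=0$; (ii) $\langle S_t^\top r^v,S_t^\top r^t\rangle=0$ if $v=t+1$ or $j_k=j_t$, and otherwise $$\langle S_t^\top r^v,S_t^\top r^t\rangle=-\sum_{w=t}^{v-1}\sum_{i=j_t}^{j_k-1}\delta_w\eta_t^i\langle p_w,p_i\rangle.$$
   Context: IS-Krylov algorithm: given a probability space $(\Omega,\mathcal{F},\mathbf{P})$ of matrices in $\mathbb{R}^{m\times q}$, a positive integer $\ell$ and $x^0\in\operatorname{Range}(A^\top)$: draw $S_0\in\Omega$ (redrawing until $S_0^\top(Ax^0-b)\neq0$), set $p_0=d_0=-A^\top S_0S_0^\top(Ax^0-b)$; for $k=0,1,\dots$: $\delta_k=\|S_k^\top(Ax^k-b)\|_2^2/\|p_k\|_2^2$; $x^{k+1}=x^k+\delta_kp_k$; draw $S_{k+1}\in\Omega$ (redrawing until $S_{k+1}^\top(Ax^{k+1}-b)\neq0$); with $j_{k+1}=\max\{k-\ell+2,0\}$ set $d_{k+1}=-A^\top S_{k+1}S_{k+1}^\top(Ax^{k+1}-b)$, $\eta_{k+1}^i=\langle d_{k+1},p_i\rangle/\|p_i\|_2^2$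 for $i=j_{k+1},\dots,k$, and $p_{k+1}=d_{k+1}-\sum_{i=j_{k+1}}^k\eta_{k+1}^ip_i$. Empty sums are zero. *)

From mathcomp Require Import all_boot all_order all_algebra.
From mathcomp Require Import reals.
Set Implicit Arguments. Unset Strict Implicit. Unset Printing Implicit Defensive.
Import Order.TTheory GRing.Theory Num.Theory.
Local Open Scope ring_scope.

Definition ip (R : realType) (p : nat) (u v : 'cV[R]_p) : R :=
  \sum_(i < p) u i ord0 * v i ord0.

Section ISKrylov.
Variables (R : realType) (m n q : nat).
Variables (A : 'M[R]_(m, n)) (b : 'cV[R]_m) (SS : nat -> 'M[R]_(m, q)).
Variables (ell : nat) (x0 : 'cV[R]_n).

Definition iskdir (Sk : 'M[R]_(m, q)) (x : 'cV[R]_n) : 'cV[R]_n :=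
  - (A^T *m (Sk *m (Sk^T *m (A *m x - b)))).

(* State after step k: (x^k, [:: p_0; ...; p_k]). *)
Fixpoint isk_state (k : nat) : 'cV[R]_n * seq 'cV[R]_n :=
  match k with
  | 0 => (x0, [:: iskdir (SS 0) x0])
  | k'.+1 =>
      let st := isk_state k' in
      let x := st.1 in
      let ps := st.2 in
      let pk := nth 0 ps k' in
      let rk := (SS k')^T *m (A *m x - b) in
      let delta := ip rk rk / ip pk pk in
      let x' := x + delta *: pk in
      let d := iskdir (SS k) x' in
      let j := (k'.+2 - ell)%N in
      let p' := d - \sum_(j <= i < k) (ip d (nth 0 ps i) / ip (nth 0 ps i) (nth 0 ps i))
                                     *: nth 0 ps i in
      (x', rcons ps p')
  end.

Definition isk_x (k : nat) : 'cV[R]_n := (isk_state k).1.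
Definition isk_p (k : nat) : 'cV[R]_n := nth 0 (isk_state k).2 k.
Definition isk_r (k : nat) : 'cV[R]_m := A *m isk_x k - b.
Definition isk_delta (k : nat) : R :=
  ip ((SS k)^T *m isk_r k) ((SS k)^T *m isk_r k) / ip (isk_p k) (isk_p k).
Definition isk_eta (k i : nat) : R :=
  ip (iskdir (SS k) (isk_x k)) (isk_p i) / ip (isk_p i) (isk_p i).
(* j_k = max{k - ell + 1, 0} *)
Definition isk_j (k : nat) : nat := (k.+1 - ell)%N.

End ISKrylov.

From mathcomp Require Import all_boot all_order all_algebra.
From mathcomp Require Import reals.
From mathcomp Require Import zify.
Import Order.TTheory GRing.Theory Num.Theory.
Local Open Scope ring_scope.

(* Everything rests on an invariant proved by strong induction on c, where x* solves
   A x = b: ||p_c|| <> 0, <p_c, x^c - x*> = -||S_c^T r^c||^2, and p_c is orthogonal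
   to p_(j_c), ..., p_(c-1).  Below c the window is then mutually orthogonal, so
   subtracting eta_c^a p_a is exactly what makes p_c orthogonal to p_a.  Since
   x^c - x^i = sum_(i <= w < c) delta_w p_w, the direction p_i only sees delta_i p_i,
   and delta_i ||p_i||^2 = ||S_i^T r^i||^2 cancels its error term; hence
   <p_c, x^c - x*> = <d_c, x^c - x*> = -||S_c^T r^c||^2 because A x* = b.
   For the cross residuals, S_t^T r^v = S_t^T r^t + sum_w delta_w S_t^T A p_w and
   <S_t^T A p_w, S_t^T r^t> = -<d_t, p_w> with d_t = p_t + sum_i eta_t^i p_i: the
   w = t term cancels ||S_t^T r^t||^2 and window orthogonality removes every i >= j_k. *)

Section InnerProduct.
Context {R : realType} {p : nat}.
Implicit Types u v w : 'cV[R]_p.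

Lemma ipE u v : ip u v = (u^T *m v) ord0 ord0.
Proof. by rewrite mxE; apply: eq_bigr => i _; rewrite mxE. Qed.

Lemma ipC u v : ip u v = ip v u.
Proof. by apply: eq_bigr => i _; rewrite mulrC. Qed.

Lemma ip0l v : ip 0 v = 0.
Proof. by rewrite /ip big1 // => i _; rewrite mxE mul0r. Qed.

Lemma ipDl u w v : ip (u + w) v = ip u v + ip w v.
Proof. by rewrite /ip -big_split; apply: eq_bigr => i _; rewrite mxE mulrDl. Qed.

Lemma ipNl u v : ip (- u) v = - ip u v.
Proof. by rewrite /ip -sumrN; apply: eq_bigr => i _; rewrite mxE mulNr. Qed.

Lemma ipBl u w v : ip (u - w) v = ip u v - ip w v.
Proof. by rewrite ipDl ipNl. Qed.

Lemma ipZl a u v : ip (a *: u) v = a * ip u v.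
Proof. by rewrite /ip mulr_sumr; apply: eq_bigr => i _; rewrite mxE mulrA. Qed.

Lemma ipDr u w v : ip v (u + w) = ip v u + ip v w.
Proof. by rewrite ipC ipDl !(ipC v). Qed.

Lemma ipZr a u v : ip v (a *: u) = a * ip v u.
Proof. by rewrite ipC ipZl ipC. Qed.

Lemma ip_suml (I : Type) (r : seq I) (P : pred I) (F : I -> 'cV[R]_p) v :
  ip (\sum_(i <- r | P i) F i) v = \sum_(i <- r | P i) ip (F i) v.
Proof. by elim/big_rec2: _ => [|i u1 u2 _ <-]; rewrite ?ip0l ?ipDl. Qed.

Lemma ip_sumr (I : Type) (r : seq I) (P : pred I) (F : I -> 'cV[R]_p) v :
  ip v (\sum_(i <- r | P i) F i) = \sum_(i <- r | P i) ip v (F i).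
Proof. by rewrite ipC ip_suml; apply: eq_bigr => i _; rewrite ipC. Qed.

Lemma ip_eq0 u : ip u u = 0 -> u = 0.
Proof.
move=> /eqP; rewrite /ip psumr_eq0 => [/allP u2_eq0|i _]; last by rewrite -expr2 sqr_ge0.
apply/matrixP => i j; rewrite (ord1 j) mxE.
by have := u2_eq0 i (mem_index_enum _); rewrite mulf_eq0 orbb => /eqP.
Qed.

End InnerProduct.

Lemma ip_mulmx (R : realType) k l (M : 'M[R]_(k, l)) u v : ip (M *m u) v = ip u (M^T *m v).
Proof. by rewrite !ipE trmx_mul mulmxA. Qed.

Lemma big_nat_single {V : nmodType} {lo hi a : nat} {F : nat -> V} :
  (lo <= a < hi)%N -> (forall i, (lo <= i < hi)%N -> i != a -> F i = 0) ->
  \sum_(lo <= i < hi) F i = F a.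
Proof.
move=> a_in F_eq0.
rewrite (bigD1_seq a) ?mem_index_iota ?iota_uniq //= big1_seq ?addr0 // => i.
by rewrite mem_index_iota => /andP[ia i_in]; apply: F_eq0.
Qed.

Lemma big_nat_eq0 {V : nmodType} {lo hi : nat} {F : nat -> V} :
  (forall i, (lo <= i < hi)%N -> F i = 0) -> \sum_(lo <= i < hi) F i = 0.
Proof. by move=> F_eq0; rewrite big1_seq // => i /andP[_]; rewrite mem_index_iota; apply: F_eq0. Qed.

Lemma ip_iskdir (R : realType) m n q (A : 'M[R]_(m, n)) b (S : 'M[R]_(m, q)) y z :
  ip (iskdir A b S y) z = - ip (S^T *m (A *m y - b)) (S^T *m (A *m z)).
Proof. by rewrite /iskdir ipNl ip_mulmx trmxK ip_mulmx. Qed.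

Section ISKrylovTheory.
Context {R : realType} {m n q : nat} {A : 'M[R]_(m, n)} {b : 'cV[R]_m}
  {SS : nat -> 'M[R]_(m, q)} {ell : nat} {x0 : 'cV[R]_n}.

Local Notation x := (isk_x A b SS ell x0).
Local Notation p := (isk_p A b SS ell x0).
Local Notation r := (isk_r A b SS ell x0).
Local Notation delta := (isk_delta A b SS ell x0).
Local Notation eta := (isk_eta A b SS ell x0).
Local Notation j := (isk_j ell).
Local Notation d k := (iskdir A b (SS k) (x k)).
Local Notation s k := ((SS k)^T *m r k).

Lemma isk_state_size k : size (isk_state A b SS ell x0 k).2 = k.+1.
Proof. by elim: k => [//|k IH] /=; rewrite size_rcons IH. Qed.

Lemma isk_state_nth k i : (i <= k)%N -> nth 0 (isk_state A b SS ell x0 k).2 i = p i.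
Proof.
elim: k => [|k IH]; first by rewrite leqn0 => /eqP ->.
rewrite leq_eqVlt => /orP[/eqP -> //|ik].
by rewrite /= nth_rcons isk_state_size ik IH.
Qed.

Lemma isk_xS k : x k.+1 = x k + delta k *: p k.
Proof. by []. Qed.

Lemma isk_pE k : p k = d k - \sum_(j k <= i < k) eta k i *: p i.
Proof.
case: k => [|k]; first by rewrite big_geq // subr0.
rewrite {1}/isk_p /= nth_rcons isk_state_size ltnn eqxx; congr (_ - _).
rewrite big_nat_cond [RHS]big_nat_cond; apply: eq_bigr => i /andP[/andP[_ ik] _].
by rewrite !isk_state_nth.
Qed.

Lemma isk_dirE k : d k = p k + \sum_(j k <= i < k) eta k i *: p i.
Proof. by rewrite isk_pE subrK. Qed.

Lemma isk_x_telescope {t v} : (t <= v)%N -> x v = x t + \sum_(t <= w < v) delta w *: p w.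
Proof.
elim: v => [|v IH]; first by rewrite leqn0 => /eqP ->; rewrite big_geq // addr0.
rewrite leq_eqVlt => /orP[/eqP -> |tv]; first by rewrite big_geq // addr0.
by rewrite big_nat_recr //= isk_xS IH // addrA.
Qed.

Lemma isk_r_telescope {t v} :
  (t <= v)%N -> r v = r t + \sum_(t <= w < v) delta w *: (A *m p w).
Proof.
move=> tv; rewrite /isk_r (isk_x_telescope tv) mulmxDr mulmx_sumr addrAC.
by congr (_ + _); apply: eq_bigr => w _; rewrite scalemxAr.
Qed.

Lemma isk_delta_mul k : ip (p k) (p k) != 0 -> delta k * ip (p k) (p k) = ip (s k) (s k).
Proof. by move=> pk_neq0; rewrite /isk_delta divfK. Qed.

Context {xs : 'cV[R]_n} (Axs : A *m xs = b) {K : nat}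
  (sres_neq0 : forall k, (k <= K)%N -> s k != 0).

Definition isk_invariant c := [/\ ip (p c) (p c) != 0,
  ip (p c) (x c - xs) = - ip (s c) (s c)
  & forall a, (j c <= a < c)%N -> ip (p c) (p a) = 0].

Section InductionStep.
Variables (c : nat) (IH : forall a, (a < c)%N -> isk_invariant a).

Lemma isk_window_orth_prev i a :
  (j c <= i < c)%N -> (j c <= a < c)%N -> i != a -> ip (p i) (p a) = 0.
Proof.
move=> i_in a_in; rewrite neq_ltn => /orP[ia|ai].
  have [_ _ orth] := IH a (proj2 (andP a_in)).
  by rewrite ipC orth //; move: i_in a_in ia; rewrite /isk_j; lia.
have [_ _ orth] := IH i (proj2 (andP i_in)).
by rewrite orth //; move: i_in a_in ai; rewrite /isk_j; lia.
Qed.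

Lemma isk_orth_prev a : (j c <= a < c)%N -> ip (p c) (p a) = 0.
Proof.
move=> a_in; have [pa_neq0 _ _] := IH a (proj2 (andP a_in)).
rewrite {1}isk_pE ipBl ip_suml (big_nat_single a_in); last first.
  by move=> i i_in ia; rewrite ipZl isk_window_orth_prev ?mulr0.
by rewrite ipZl /isk_eta divfK // subrr.
Qed.

Lemma isk_err_orth_prev i : (j c <= i < c)%N -> ip (p i) (x c - xs) = 0.
Proof.
move=> i_in; have /andP[_ ic] := i_in; have [pi_neq0 err_i _] := IH i ic.
rewrite (isk_x_telescope (ltnW ic)) addrAC ipDr err_i ip_sumr.
rewrite (big_nat_single (_ : i <= i < c)%N) ?leqnn //; last first.
  by move=> w w_in wi; rewrite ipZr isk_window_orth_prev ?mulr0 //; move: i_in w_in; lia.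
by rewrite ipZr isk_delta_mul // addNr.
Qed.

Lemma isk_err : ip (p c) (x c - xs) = - ip (s c) (s c).
Proof.
rewrite {1}isk_pE ipBl ip_suml big_nat_eq0 ?subr0; last first.
  by move=> i i_in; rewrite ipZl isk_err_orth_prev ?mulr0.
by rewrite ip_iskdir (mulmxBr A) Axs.
Qed.

Lemma isk_invariant_step : (c <= K)%N -> isk_invariant c.
Proof.
move=> cK; split; [|exact: isk_err|exact: isk_orth_prev].
apply/eqP => /ip_eq0 pc_eq0; have := isk_err; rewrite pc_eq0 ip0l.
move=> /esym/eqP; rewrite oppr_eq0 => /eqP/ip_eq0 sc_eq0.
by move: (sres_neq0 c cK); rewrite sc_eq0 eqxx.
Qed.

End InductionStep.

Lemma isk_invariant_holds c : (c <= K)%N -> isk_invariant c.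
Proof.
elim/ltn_ind: c => c IH cK; apply: isk_invariant_step => // a ac.
by apply: IH => //; apply: leq_trans (ltnW ac) cK.
Qed.

Lemma isk_p_neq0 c : (c <= K)%N -> ip (p c) (p c) != 0.
Proof. by move=> /isk_invariant_holds[]. Qed.

Lemma isk_window_orth {k i w} : (k <= K)%N ->
  (j k <= i <= k)%N -> (j k <= w <= k)%N -> i != w -> ip (p i) (p w) = 0.
Proof.
wlog iw : i w / (i < w)%N.
  move=> hwlog kK i_in w_in iw_neq; have := iw_neq; rewrite neq_ltn => /orP[iw|wi].
    exact: hwlog.
  by rewrite ipC; apply: hwlog; rewrite // eq_sym.
move=> kK i_in w_in _.
have [_ _ orth] := isk_invariant_holds w (leq_trans (proj2 (andP w_in)) kK).
by rewrite ipC orth //; move: i_in w_in iw; rewrite /isk_j; lia.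
Qed.

Lemma isk_dir_ip {t w k} : (k <= K)%N -> (j k <= t <= w)%N -> (w <= k)%N ->
  ip (d t) (p w) = ip (p t) (p w) + \sum_(j t <= i < j k) eta t i * ip (p i) (p w).
Proof.
move=> kK /andP[kt tw] wk; have jtk : (j t <= j k)%N by rewrite /isk_j; lia.
rewrite isk_dirE ipDl ip_suml (big_cat_nat jtk kt) /= [X in _ + (_ + X)]big_nat_eq0 ?addr0.
  by congr (_ + _); apply: eq_bigr => i _; rewrite ipZl.
by move=> i i_in; rewrite ipZl (isk_window_orth kK) ?mulr0 //; move: i_in tw wk; lia.
Qed.

Lemma isk_sres_cross {t v k} : (k <= K)%N -> (j k <= t < v)%N -> (v <= k)%N ->
  ip ((SS t)^T *m r v) (s t) =
  - \sum_(t <= w < v) \sum_(j t <= i < j k) delta w * eta t i * ip (p w) (p i).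
Proof.
move=> kK /andP[kt tv] vk.
have summand w : (t <= w < v)%N ->
    ip ((SS t)^T *m (delta w *: (A *m p w))) (s t) =
    - (delta w * ip (p t) (p w)) - \sum_(j t <= i < j k) delta w * eta t i * ip (p w) (p i).
  move=> /andP[tw wv]; rewrite -scalemxAr ipZl.
  have -> : ip ((SS t)^T *m (A *m p w)) (s t) = - ip (d t) (p w).
    by rewrite ip_iskdir opprK ipC.
  rewrite (isk_dir_ip kK) ?kt //; last by lia.
  rewrite mulrN mulrDr opprD; congr (_ - _); rewrite mulr_sumr; apply: eq_bigr => i _.
  by rewrite mulrA ipC.
rewrite (isk_r_telescope (ltnW tv)) mulmxDr mulmx_sumr ipDl ip_suml.
rewrite (eq_big_nat _ _ summand) big_split /= !sumrN addrA.
rewrite (big_nat_single (_ : t <= t < v)%N) ?leqnn //; last first.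
  by move=> w /andP[tw wv] wt; rewrite (isk_window_orth kK) ?mulr0 //; lia.
by rewrite isk_delta_mul ?subrr ?add0r // isk_p_neq0 //; lia.
Qed.

End ISKrylovTheory.

Theorem proposition4p4 (R : realType) (m n q : nat)
  (A : 'M[R]_(m, n)) (b : 'cV[R]_m) (SS : nat -> 'M[R]_(m, q))
  (ell : nat) (x0 : 'cV[R]_n) (K : nat) :
  (0 < ell)%N ->
  (exists x : 'cV[R]_n, A *m x = b) ->
  (exists y : 'cV[R]_m, x0 = A^T *m y) ->
  (forall k, (k <= K)%N -> (SS k)^T *m isk_r A b SS ell x0 k != 0) ->
  forall t v k : nat, (k <= K)%N ->
    (isk_j ell k <= t)%N -> (t < v)%N -> (v <= k)%N ->
    ip (isk_p A b SS ell x0 v) (isk_p A b SS ell x0 t) = 0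
    /\ ((v = t.+1 \/ isk_j ell k = isk_j ell t) ->
        ip ((SS t)^T *m isk_r A b SS ell x0 v) ((SS t)^T *m isk_r A b SS ell x0 t) = 0)
    /\ (~ (v = t.+1 \/ isk_j ell k = isk_j ell t) ->
        ip ((SS t)^T *m isk_r A b SS ell x0 v) ((SS t)^T *m isk_r A b SS ell x0 t) =
        - \sum_(t <= w < v) \sum_(isk_j ell t <= i < isk_j ell k)
            isk_delta A b SS ell x0 w * isk_eta A b SS ell x0 t i
            * ip (isk_p A b SS ell x0 w) (isk_p A b SS ell x0 i)).
Proof.
move=> _ [xs Axs] _ sres_neq0 t v k kK kt tv vk.
have ktv : (isk_j ell k <= t < v)%N by rewrite kt tv.
have cross := isk_sres_cross Axs sres_neq0 kK ktv vk.
split; first by apply: (isk_window_orth Axs sres_neq0 kK); move: kt; lia.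
split=> [[v_eq|j_eq]|_]; rewrite cross //.
- rewrite v_eq big_nat1 big_nat_eq0 ?oppr0 // => i i_in.
  by rewrite (isk_window_orth Axs sres_neq0 (k:=t)) ?mulr0 //; move: i_in kt; rewrite /isk_j; lia.
- by rewrite big_nat_eq0 ?oppr0 // => w _; rewrite j_eq big_geq.
Qed.
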